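(* Let $A,B,C$ be C*-algebras and $\phi\colon A\to C$, $\psi\colon B\to C$ *-homomorphisms with $\phi$ surjective. Let $I\subseteq A$, $J\subseteq B$, $K\subseteq C$ be closed two-sided ideals with $\phi(I)=K$ and $\psi(J)\subseteq K$, and let $\overline\phi\colon A/I\to C/K$, $\overline\psi\colon B/J\to C/K$ be the induced maps. Then the map $$\gamma\colon (A\oplus_C B)/(I\oplus_K J)\to (A/I)\oplus_{C/K}(B/J),\qquad \gamma((a,b)+I\oplus_K J)=(a+I,\,b+J)$$ is a *-isomorphism.
   Context: For *-homomorphisms $\phi\colon A\to C$, $\psi\colon B\to C$, the pullback is $A\oplus_C B=\{(a,b)\in A\oplus B:\phi(a)=\psi(b)\}$. Here $I\oplus_K J=\{(a,b)\in A\oplus_C B: a\in I, b\in J\}$ (the pullback with respect to $\phi|_I$ and $\psi|_J$), and $(A/I)\oplus_{C/K}(B/J)$ is the pullback with respect to $\overline\phi$ and $\overline\psi$. *)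

From HB Require Import structures.
From mathcomp Require Import all_boot all_order all_algebra.
From mathcomp Require Import boolp classical_sets reals.
From mathcomp Require Import complex.
Set Implicit Arguments. Unset Strict Implicit. Unset Printing Implicit Defensive.
Import Order.TTheory GRing.Theory Num.Theory.
Local Open Scope ring_scope.
Local Open Scope classical_set_scope.

Record cstar_algebra (R : realType) := CStarAlgebra {
  cs_car :> lmodType R[i];
  cs_mul : cs_car -> cs_car -> cs_car;
  cs_star : cs_car -> cs_car;
  cs_norm : cs_car -> R;
  cs_mulA : forall x y z, cs_mul x (cs_mul y z) = cs_mul (cs_mul x y) z;
  cs_mulDl : forall x y z, cs_mul (x + y) z = cs_mul x z + cs_mul y z;
  cs_mulDr : forall x y z, cs_mul x (y + z) = cs_mul x y + cs_mul x z;
  cs_mulZl : forall (c : R[i]) x y, cs_mul (c *: x) y = c *: cs_mul x y;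
  cs_mulZr : forall (c : R[i]) x y, cs_mul x (c *: y) = c *: cs_mul x y;
  cs_starK : forall x, cs_star (cs_star x) = x;
  cs_starD : forall x y, cs_star (x + y) = cs_star x + cs_star y;
  cs_starZ : forall (c : R[i]) x, cs_star (c *: x) = (Num.conj c) *: cs_star x;
  cs_starM : forall x y, cs_star (cs_mul x y) = cs_mul (cs_star y) (cs_star x);
  cs_norm_eq0 : forall x, cs_norm x = 0 -> x = 0;
  cs_norm_ge0 : forall x, 0 <= cs_norm x;
  cs_normD : forall x y, cs_norm (x + y) <= cs_norm x + cs_norm y;
  cs_normZ : forall (c : R[i]) x, ((cs_norm (c *: x))%:C)%C = `|c| * ((cs_norm x)%:C)%C;
  cs_normM : forall x y, cs_norm (cs_mul x y) <= cs_norm x * cs_norm y;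
  cs_cstar : forall x, cs_norm (cs_mul (cs_star x) x) = cs_norm x ^+ 2;
  cs_complete : forall u : nat -> cs_car,
    (forall e : R, 0 < e -> exists N, forall m n, (N <= m)%N -> (N <= n)%N ->
        cs_norm (u m - u n) < e) ->
    exists l, forall e : R, 0 < e -> exists N, forall n, (N <= n)%N ->
        cs_norm (u n - l) < e
}.

Section Defs.
Variable R : realType.

Definition cs_converges (A : cstar_algebra R) (u : nat -> A) (l : A) :=
  forall e : R, 0 < e -> exists N, forall n, (N <= n)%N -> cs_norm (u n - l) < e.

Definition star_hom (A B : cstar_algebra R) (f : A -> B) :=
  [/\ forall (c : R[i]) x y, f (c *: x + y) = c *: f x + f y,
      forall x y, f (cs_mul x y) = cs_mul (f x) (f y)
    & forall x, f (cs_star x) = cs_star (f x)].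

Definition closed_ideal (A : cstar_algebra R) (I : set A) :=
  [/\ I 0,
      forall x y, I x -> I y -> I (x + y),
      forall (c : R[i]) x, I x -> I (c *: x),
      forall a x, I x -> I (cs_mul a x) /\ I (cs_mul x a)
    & forall (u : nat -> A) l, (forall n, I (u n)) -> cs_converges u l -> I l].

(* Q together with q : A -> Q is the quotient C*-algebra A/I, i.e.
   q is a surjective *-homomorphism with kernel exactly I. *)
Definition is_quotient (A Q : cstar_algebra R) (I : set A) (q : A -> Q) :=
  [/\ star_hom q, forall y, exists x, q x = y & forall x, q x = 0 <-> I x].

Definition pullback (A B C : cstar_algebra R) (phi : A -> C) (psi : B -> C)
  : set (A * B) := [set ab | phi ab.1 = psi ab.2].

Definition pullback_ideal (A B C : cstar_algebra R) (phi : A -> C) (psi : B -> C)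
  (I : set A) (J : set B) : set (A * B) :=
  [set ab | pullback phi psi ab /\ I ab.1 /\ J ab.2].

(* P together with p is the quotient of the pullback C*-algebra
   A (+)_C B (with componentwise operations) by the ideal I (+)_K J. *)
Definition is_pullback_quotient (A B C P : cstar_algebra R)
  (phi : A -> C) (psi : B -> C) (I : set A) (J : set B) (p : A * B -> P) :=
  let PB := pullback phi psi in
  [/\ forall (c : R[i]) ab ab', PB ab -> PB ab' ->
        p (c *: ab.1 + ab'.1, c *: ab.2 + ab'.2) = c *: p ab + p ab',
      forall ab ab', PB ab -> PB ab' ->
        p (cs_mul ab.1 ab'.1, cs_mul ab.2 ab'.2) = cs_mul (p ab) (p ab'),
      forall ab, PB ab -> p (cs_star ab.1, cs_star ab.2) = cs_star (p ab),
      forall z, exists2 ab, PB ab & p ab = z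
    & forall ab, PB ab -> (p ab = 0 <-> pullback_ideal phi psi I J ab)].

Definition star_iso_onto_pullback (P X Y Z : cstar_algebra R)
  (f1 : X -> Z) (f2 : Y -> Z) (g : P -> X * Y) :=
  [/\ forall (c : R[i]) z w,
        g (c *: z + w) = (c *: (g z).1 + (g w).1, c *: (g z).2 + (g w).2),
      forall z w, g (cs_mul z w) = (cs_mul (g z).1 (g w).1, cs_mul (g z).2 (g w).2),
      forall z, g (cs_star z) = (cs_star (g z).1, cs_star (g z).2),
      injective g
    & forall xy, pullback f1 f2 xy <-> exists z, g z = xy].

End Defs.

From HB Require Import structures.
From mathcomp Require Import all_boot all_order all_algebra.
From mathcomp Require Import boolp classical_sets reals.
From mathcomp Require Import complex.
Set Implicit Arguments. Unset Strict Implicit. Unset Printing Implicit Defensive.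
Import Order.TTheory GRing.Theory Num.Theory.
Local Open Scope ring_scope.
Local Open Scope classical_set_scope.

(* Two classes in (A (+)_C B)/(I (+)_K J) agree iff both components agree
   modulo I and J, so gamma is well defined and injective; every *-operation
   is computed on representatives, so gamma is a *-homomorphism.  For
   surjectivity, if phi a and psi b agree modulo K = phi(I), say
   psi b - phi a = phi i with i in I, then (a + i, b) lies in the pullback
   and is sent to (a + I, b + J). *)

Lemma scaleN1_addr_eq0 (R : nzRingType) (V : lmodType R) (u v : V) :
  (-1) *: u + v = 0 <-> v = u.
Proof.
rewrite scaleN1r addrC; split=> [/eqP | ->]; last exact: subrr.
by rewrite subr_eq0 => /eqP.
Qed.

Section LinearMaps.
Variables (R : realType) (U V : lmodType R[i]) (f : U -> V).
Hypothesis f_lin : forall (c : R[i]) x y, f (c *: x + y) = c *: f x + f y.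

Lemma lin_additive x y : f (x + y) = f x + f y.
Proof. by have := f_lin 1 x y; rewrite !scale1r. Qed.

Lemma lin_subr_eq0 x y : f ((-1) *: x + y) = 0 <-> f y = f x.
Proof. by rewrite f_lin; apply: scaleN1_addr_eq0. Qed.

End LinearMaps.

Lemma quotient_eqP (R : realType) (A Q : cstar_algebra R) (I : set A)
    (q : A -> Q) :
  is_quotient I q -> forall x y, q y = q x <-> I ((-1) *: x + y).
Proof.
move=> [[q_lin _ _] _ q_ker] x y.
by split=> [/(lin_subr_eq0 q_lin)/q_ker | /q_ker/(lin_subr_eq0 q_lin)].
Qed.

Lemma image_ideal_lift (R : realType) (A C QC : cstar_algebra R)
    (phi : A -> C) (I : set A) (K : set C) (qK : C -> QC) :
  star_hom phi -> phi @` I = K -> is_quotient K qK ->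
  forall a c, qK c = qK (phi a) -> exists2 i, I i & phi (a + i) = c.
Proof.
move=> [phi_lin _ _] IK qK_quo a c /(quotient_eqP qK_quo).
rewrite -IK => -[i Ii ei]; exists i => //.
by rewrite (lin_additive phi_lin) ei scaleN1r addNKr.
Qed.

Section Pullback.
Variables (R : realType) (A B C : cstar_algebra R).
Variables (phi : A -> C) (psi : B -> C).
Hypotheses (phi_hom : star_hom phi) (psi_hom : star_hom psi).

Local Notation PB := (pullback phi psi).

Lemma pullback_lin (c : R[i]) ab ab' :
  PB ab -> PB ab' -> PB (c *: ab.1 + ab'.1, c *: ab.2 + ab'.2).
Proof.
case: phi_hom psi_hom => [phiL _ _] [psiL _ _].
by rewrite /pullback /= phiL psiL => -> ->.
Qed.

Lemma pullback_mul ab ab' :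
  PB ab -> PB ab' -> PB (cs_mul ab.1 ab'.1, cs_mul ab.2 ab'.2).
Proof.
case: phi_hom psi_hom => [_ phiM _] [_ psiM _].
by rewrite /pullback /= phiM psiM => -> ->.
Qed.

Lemma pullback_star ab : PB ab -> PB (cs_star ab.1, cs_star ab.2).
Proof.
case: phi_hom psi_hom => [_ _ phiS] [_ _ psiS].
by rewrite /pullback /= phiS psiS => ->.
Qed.

Variables (I : set A) (J : set B) (QA QB P : cstar_algebra R).
Variables (qI : A -> QA) (qJ : B -> QB) (p : A * B -> P).
Hypotheses (qI_quo : is_quotient I qI) (qJ_quo : is_quotient J qJ).
Hypothesis p_quo : is_pullback_quotient phi psi I J p.

Lemma pullback_quotient_eqP ab ab' : PB ab -> PB ab' ->
  p ab' = p ab <-> qI ab'.1 = qI ab.1 /\ qJ ab'.2 = qJ ab.2.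
Proof.
move=> hab hab'; case: p_quo => p_lin _ _ _ p_ker.
have hd := pullback_lin (-1) hab hab'.
have pdE : p ((-1) *: ab.1 + ab'.1, (-1) *: ab.2 + ab'.2) = (-1) *: p ab + p ab'.
  exact: p_lin.
rewrite -scaleN1_addr_eq0 -pdE p_ker //.
rewrite !(quotient_eqP qI_quo, quotient_eqP qJ_quo).
by split=> [[_] | []].
Qed.

Let p_onto z : exists2 ab, PB ab & p ab = z.
Proof. by case: p_quo => _ _ _ onto _; apply: onto. Qed.

Lemma pullback_quotient_factor :
  exists gamma : P -> QA * QB,
    forall ab, PB ab -> gamma (p ab) = (qI ab.1, qJ ab.2).
Proof.
pose rep z := s2val (cid2 (p_onto z)).
exists (fun z => (qI (rep z).1, qJ (rep z).2)) => ab hab.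
rewrite /rep; case: cid2 => ab' hab' e /=.
by have [-> ->] := (pullback_quotient_eqP hab hab').1 e.
Qed.

Variable gamma : P -> QA * QB.
Hypothesis gammaE : forall ab, PB ab -> gamma (p ab) = (qI ab.1, qJ ab.2).

Lemma pullback_quotient_map_hom :
  [/\ forall (c : R[i]) z w,
        gamma (c *: z + w) = (c *: (gamma z).1 + (gamma w).1,
                              c *: (gamma z).2 + (gamma w).2),
      forall z w, gamma (cs_mul z w) =
        (cs_mul (gamma z).1 (gamma w).1, cs_mul (gamma z).2 (gamma w).2)
    & forall z, gamma (cs_star z) = (cs_star (gamma z).1, cs_star (gamma z).2)].
Proof.
case: p_quo qI_quo qJ_quo => pL pM pS _ _ [[qIL qIM qIS] _ _] [[qJL qJM qJS] _ _].
split=> [c z w | z w | z]; have [ab hab <-] := p_onto z.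
- have [ab' hab' <-] := p_onto w.
  rewrite -pL // gammaE; last exact: pullback_lin.
  by rewrite !gammaE //= qIL qJL.
- have [ab' hab' <-] := p_onto w.
  rewrite -pM // gammaE; last exact: pullback_mul.
  by rewrite !gammaE //= qIM qJM.
- rewrite -pS // gammaE; last exact: pullback_star.
  by rewrite gammaE //= qIS qJS.
Qed.

Lemma pullback_quotient_map_inj : injective gamma.
Proof.
move=> z w; have [ab hab <-] := p_onto z; have [ab' hab' <-] := p_onto w.
by rewrite !gammaE // => -[e1 e2]; apply/(pullback_quotient_eqP hab' hab).
Qed.

Variables (K : set C) (QC : cstar_algebra R) (qK : C -> QC).
Variables (phib : QA -> QC) (psib : QB -> QC).
Hypotheses (IK : phi @` I = K) (qK_quo : is_quotient K qK).
Hypotheses (phibE : forall a, phib (qI a) = qK (phi a))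
           (psibE : forall b, psib (qJ b) = qK (psi b)).

Lemma pullback_quotient_map_range xy :
  pullback phib psib xy <-> exists z, gamma z = xy.
Proof.
case: xy qI_quo qJ_quo => x y [[qI_lin _ _] qI_onto qI_ker] [_ qJ_onto _].
split=> [| [z <-]].
- have [a <-] := qI_onto x; have [b <-] := qJ_onto y.
  rewrite /pullback /= phibE psibE => /esym.
  case/(image_ideal_lift phi_hom IK qK_quo) => i Ii hi.
  have hab : PB (a + i, b) by [].
  exists (p (a + i, b)).
  by rewrite gammaE //= (lin_additive qI_lin) (proj2 (qI_ker i) Ii) addr0.
- have [ab hab <-] := p_onto z.
  by rewrite gammaE // /pullback /= phibE psibE hab.
Qed.

End Pullback.

Theorem proposition2p9 (R : realType) (A B C : cstar_algebra R)
  (phi : A -> C) (psi : B -> C) (I : set A) (J : set B) (K : set C)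
  (QA QB QC P : cstar_algebra R)
  (qI : A -> QA) (qJ : B -> QB) (qK : C -> QC) (p : A * B -> P)
  (phib : QA -> QC) (psib : QB -> QC) :
  star_hom phi -> star_hom psi -> (forall c, exists a, phi a = c) ->
  closed_ideal I -> closed_ideal J -> closed_ideal K ->
  phi @` I = K -> psi @` J `<=` K ->
  is_quotient I qI -> is_quotient J qJ -> is_quotient K qK ->
  (forall a, phib (qI a) = qK (phi a)) ->
  (forall b, psib (qJ b) = qK (psi b)) ->
  is_pullback_quotient phi psi I J p ->
  exists gamma : P -> QA * QB,
    (forall ab, pullback phi psi ab -> gamma (p ab) = (qI ab.1, qJ ab.2)) /\
    star_iso_onto_pullback phib psib gamma.
Proof.
(* Surjectivity of phi, closedness of the ideals and psi(J) <= K only serve to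
   build the quotients and the induced maps, which are given here. *)
move=> phi_hom psi_hom _ _ _ _ IK _ qI_quo qJ_quo qK_quo phibE psibE p_quo.
have [gamma gammaE] :=
  pullback_quotient_factor phi_hom psi_hom qI_quo qJ_quo p_quo.
have [gL gM gS] :=
  pullback_quotient_map_hom phi_hom psi_hom qI_quo qJ_quo p_quo gammaE.
have g_inj :=
  pullback_quotient_map_inj phi_hom psi_hom qI_quo qJ_quo p_quo gammaE.
have g_range := pullback_quotient_map_range phi_hom qI_quo qJ_quo p_quo gammaE
  IK qK_quo phibE psibE.
by exists gamma; split.
Qed.
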